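(* Let $r\ge 1$ be such that $2r+1=t^2$ for an (odd) integer $t$. In $\mathcal{C}(B_r)$, let $V:=X_{2\lambda_1}$ and $W_i:=X_{\gamma^{it}}$ for $1\le i\le (t-1)/2$. Then the full fusion subcategory $\mathcal{D}(B_r)$ of $\mathcal{C}(B_r)$ generated by $\mathbf{1}, V, W_1,\dots,W_{(t-1)/2}$ has exactly these objects as its simple objects (up to isomorphism), i.e. their additive span is closed under tensor product, and $\mathcal{D}(B_r)$ is symmetric.
   Context: $\mathcal{C}(B_r)$ denotes the unitary modular (ribbon fusion) category $\mathcal{C}(\mathfrak{so}_{2r+1},q,\ell)$ associated with the quantum group of $\mathfrak{so}_{2r+1}$ at $\ell=4r+2$, $q=e^{\pi i/\ell}$ (equivalently the level-2 category $SO(2r+1)_2$). With fundamental weights $\lambda_1=(1,0,\dots,0),\dots,\lambda_{r-1}=(1,\dots,1,0)$, $\lambda_r=\tfrac12(1,\dots,1)$, its simple objects are labeled by $\mathbf{0},2\lambda_1,\gamma^1,\dots,\gamma^r,\varepsilon,\varepsilon'$ where $\gamma^i=\lambda_i$ for $1\le i\le r-1$, $\gamma^r=2\lambda_r$, $\varepsilon=\lambda_r$, $\varepsilon'=\lambda_1+\lambda_r$; the simple objects $X_{\mathbf 0}=\mathbf{1}$ and $X_{2\lambda_1}$ have dimension 1, the $X_{\gamma^i}$ have dimension 2, and $X_\varepsilon,X_{\varepsilon'}$ have dimension $\sqrt{2r+1}$; all simple objects are self-dual. The normalized $S$-matrix $\tilde s$ (with $\tilde s_{\mathbf 0,\mathbf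 0}=1$) satisfies $\tilde s(2\lambda_1,2\lambda_1)=1$, $\tilde s(2\lambda_1,\gamma^i)=2$, $\tilde s(2\lambda_1,\varepsilon)=\tilde s(2\lambda_1,\varepsilon')=-\sqrt{2r+1}$, $\tilde s(\gamma^i,\gamma^j)=4\cos(2ij\pi/(2r+1))$, $\tilde s(\gamma^i,\varepsilon)=\tilde s(\gamma^i,\varepsilon')=0$. The twists are $\theta_\lambda=q^{\langle\lambda+2\rho,\lambda\rangle}$ (normalized so short roots have squared length 2). A braided fusion subcategory $\mathcal{D}$ is symmetric if $c_{Y,X}c_{X,Y}=\mathrm{Id}_{X\otimes Y}$ for all $X,Y\in\mathcal{D}$, equivalently $\tilde s_{X,Y}=\dim(X)\dim(Y)$ for all simple $X,Y$ in $\mathcal{D}$. *)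

From Stdlib Require Import Reals Lia Arith List.
Open Scope R_scope.

(* Simple objects of C(B_r) = SO(2r+1)_2, r >= 1:
   L1 = X_0 (unit), LV = X_{2 lambda_1}, LG i = X_{gamma^i} (1 <= i <= r),
   LE = X_epsilon, LE' = X_epsilon'. *)
Inductive label : Set :=
  | L1 : label
  | LV : label
  | LG : nat -> label
  | LE : label
  | LE' : label.

Definition valid (r : nat) (x : label) : Prop :=
  match x with
  | LG i => (1 <= i <= r)%nat
  | _ => True
  end.

Definition dim (r : nat) (x : label) : R :=
  match x with
  | L1 => 1
  | LV => 1
  | LG _ => 2
  | LE => sqrt (INR (2 * r + 1))
  | LE' => sqrt (INR (2 * r + 1))
  end.

(* gamma^k for 1 <= k <= 2r is identified with gamma^(2r+1-k) when k > r. *)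
Definition refl (r k : nat) : nat := if Nat.leb k r then k else (2 * r + 1 - k)%nat.

Definition all_gammas (r : nat) : list label := map LG (seq 1 r).

(* Fusion rules of C(B_r): fusion r a b is the list of simple summands
   (with multiplicity) of X_a (x) X_b. *)
Definition fusion (r : nat) (a b : label) : list label :=
  match a, b with
  | L1, x => x :: nil
  | x, L1 => x :: nil
  | LV, LV => L1 :: nil
  | LV, LG i => LG i :: nil
  | LG i, LV => LG i :: nil
  | LV, LE => LE' :: nil
  | LE, LV => LE' :: nil
  | LV, LE' => LE :: nil
  | LE', LV => LE :: nil
  | LG i, LG j =>
      if Nat.eqb i j then L1 :: LV :: LG (refl r (2 * i)) :: nil
      else LG (refl r (i + j)) :: LG (if Nat.leb i j then j - i else i - j)%nat :: nil
  | LG _, LE => LE :: LE' :: nil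
  | LE, LG _ => LE :: LE' :: nil
  | LG _, LE' => LE :: LE' :: nil
  | LE', LG _ => LE :: LE' :: nil
  | LE, LE => L1 :: all_gammas r
  | LE', LE' => L1 :: all_gammas r
  | LE, LE' => LV :: all_gammas r
  | LE', LE => LV :: all_gammas r
  end.

(* Normalized S-matrix entries given in the context; the entries among
   {epsilon, epsilon'} are not specified there, hence [None]. *)
Definition stilde (r : nat) (a b : label) : option R :=
  match a, b with
  | L1, x => Some (dim r x)
  | x, L1 => Some (dim r x)
  | LV, LV => Some 1
  | LV, LG _ => Some 2
  | LG _, LV => Some 2
  | LV, LE | LV, LE' | LE, LV | LE', LV => Some (- sqrt (INR (2 * r + 1)))
  | LG i, LG j => Some (4 * cos (2 * INR (i * j) * PI / INR (2 * r + 1)))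
  | LG _, LE | LG _, LE' | LE, LG _ | LE', LG _ => Some 0
  | _, _ => None
  end.

Definition inD (t : nat) (x : label) : Prop :=
  x = L1 \/ x = LV \/ exists i, (1 <= i <= (t - 1) / 2)%nat /\ x = LG (i * t).

Definition fusion_closed (r : nat) (P : label -> Prop) : Prop :=
  forall a b c, P a -> P b -> In c (fusion r a b) -> P c.

Definition symmetric_sub (r : nat) (P : label -> Prop) : Prop :=
  forall a b, P a -> P b -> stilde r a b = Some (dim r a * dim r b).

From Stdlib Require Import Reals Lia Arith List.

(* Since 2r+1 = t^2 is odd, t = 2m+1 and r = 2m(m+1); the W_i are the
   gamma-labels that are multiples of t in the range 1..r, namely i t with
   1 <= i <= m (Lemma [multiple_le_rank]).  The fusion rules only produce
   gamma-labels of the form refl r (a + b) or |a - b|; for multiples of t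
   these are again multiples s t with 1 <= s <= m (Lemmas [refl_multiple]
   and [dist_multiple]), which gives closure under tensor product
   ([gamma_multiples_fusion]).  Symmetry reduces to the W_i-W_j entries of
   the S-matrix, where 4 cos(2 i j t^2 pi / t^2) = 4 = dim W_i dim W_j
   ([stilde_gamma_multiples]). *)

Lemma odd_square_rank (r t : nat) :
  (2 * r + 1 = t * t)%nat -> exists m, t = (2 * m + 1)%nat /\ r = (2 * m * (m + 1))%nat.
Proof.
  intro ht.
  destruct (Nat.Even_or_Odd t) as [[k ->] | [m ->]].
  - exfalso; nia.
  - exists m; split; [reflexivity | nia].
Qed.

Section GammaMultiples.

Variable m : nat.

Let t : nat := (2 * m + 1)%nat.
Let r : nat := (2 * m * (m + 1))%nat.

Lemma multiple_le_rank (s : nat) : (s * t <= r <-> s <= m)%nat.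
Proof.
  unfold t, r; split; intro H.
  - destruct (le_lt_dec s m) as [h | h]; [exact h |].
    assert ((m + 1) * (2 * m + 1) <= s * (2 * m + 1))%nat
      by (apply Nat.mul_le_mono_r; lia).
    lia.
  - assert (s * (2 * m + 1) <= m * (2 * m + 1))%nat
      by (apply Nat.mul_le_mono_r; lia).
    lia.
Qed.

(* Reflecting a multiple s t with 1 <= s <= 2m back into 1..r gives
   k t with 1 <= k <= m (namely k = s or k = t - s), since 2r+1 = t^2. *)
Lemma refl_multiple (s : nat) :
  (1 <= s <= 2 * m)%nat -> exists k, (1 <= k <= m)%nat /\ refl r (s * t) = (k * t)%nat.
Proof.
  intro hs; unfold refl.
  destruct (Nat.leb_spec (s * t) r) as [h | h].
  - exists s; apply multiple_le_rank in h; split; [lia | reflexivity].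
  - exists (t - s)%nat.
    assert (hsm : ~ (s <= m)%nat) by (rewrite <- multiple_le_rank; lia).
    unfold t, r in *; split; [lia |].
    rewrite Nat.mul_sub_distr_r.
    replace (2 * (2 * m * (m + 1)) + 1)%nat with ((2 * m + 1) * (2 * m + 1))%nat
      by ring.
    reflexivity.
Qed.

Lemma dist_multiple (i j : nat) :
  (1 <= i <= m)%nat -> (1 <= j <= m)%nat -> i <> j ->
  exists d, (1 <= d <= m)%nat /\
    (if Nat.leb (i * t) (j * t) then j * t - i * t else i * t - j * t)%nat = (d * t)%nat.
Proof.
  intros hi hj hij; unfold t.
  destruct (Nat.leb_spec (i * (2 * m + 1)) (j * (2 * m + 1))).
  - exists (j - i)%nat; split; [nia | now rewrite Nat.mul_sub_distr_r].
  - exists (i - j)%nat; split; [nia | now rewrite Nat.mul_sub_distr_r].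
Qed.

Definition inD_m (x : label) : Prop :=
  x = L1 \/ x = LV \/ exists i, (1 <= i <= m)%nat /\ x = LG (i * t).

Lemma gamma_multiples_fusion (i j : nat) (c : label) :
  (1 <= i <= m)%nat -> (1 <= j <= m)%nat ->
  In c (fusion r (LG (i * t)) (LG (j * t))) -> inD_m c.
Proof.
  intros hi hj hc; cbn [fusion] in hc.
  destruct (Nat.eqb_spec (i * t) (j * t)) as [e | e]; cbn [In] in hc.
  - assert (i = j) by (unfold t in e; nia); subst j.
    destruct hc as [<- | [<- | [<- | []]]]; [left | right; left |]; auto.
    right; right.
    replace (2 * (i * t))%nat with ((2 * i) * t)%nat by ring.
    destruct (refl_multiple (2 * i)) as [k [hk ->]]; [lia | eauto].
  - assert (i <> j) by (intros ->; auto).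
    destruct hc as [<- | [<- | []]]; right; right.
    + replace (i * t + j * t)%nat with ((i + j) * t)%nat by ring.
      destruct (refl_multiple (i + j)) as [k [hk ->]]; [lia | eauto].
    + destruct (dist_multiple i j) as [d [hd ->]]; eauto.
Qed.

(* S-matrix entry between W_i and W_j: the angle 2 (i t)(j t) pi / t^2 is a
   multiple of 2 pi, so the entry is 4 = dim W_i * dim W_j. *)
Lemma stilde_gamma_multiples (i j : nat) :
  stilde r (LG (i * t)) (LG (j * t)) = Some (2 * 2).
Proof.
  cbn [stilde]; f_equal.
  replace (2 * INR (i * t * (j * t)) * PI / INR (2 * r + 1))
    with (0 + 2 * INR (i * j) * PI).
  - rewrite cos_period, cos_0; ring.
  - unfold t, r.
    replace (i * (2 * m + 1) * (j * (2 * m + 1)))%nat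
      with ((i * j) * ((2 * m + 1) * (2 * m + 1)))%nat by ring.
    replace (2 * (2 * m * (m + 1)) + 1)%nat with ((2 * m + 1) * (2 * m + 1))%nat
      by ring.
    rewrite (mult_INR (i * j)); field; apply not_0_INR; lia.
Qed.

End GammaMultiples.

Theorem lemma3p2 (r t : nat) (hr : (1 <= r)%nat) (ht : (2 * r + 1 = t * t)%nat) :
  (forall x, inD t x -> valid r x) /\
  fusion_closed r (inD t) /\
  symmetric_sub r (inD t).
Proof.
  destruct (odd_square_rank r t ht) as [m [-> ->]].
  assert (hD : inD (2 * m + 1) = inD_m m).
  { unfold inD, inD_m.
    replace ((2 * m + 1 - 1) / 2)%nat with m; [reflexivity |].
    replace (2 * m + 1 - 1)%nat with (m * 2)%nat by lia.
    symmetry; apply Nat.div_mul; lia. }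
  rewrite hD; split; [| split].
  - intros x [-> | [-> | [i [hi ->]]]]; cbn [valid]; auto.
    assert (i * (2 * m + 1) <= 2 * m * (m + 1))%nat by (apply multiple_le_rank; lia).
    lia.
  - intros a b c [-> | [-> | [i [hi ->]]]] [-> | [-> | [j [hj ->]]]] hc;
      try (apply (gamma_multiples_fusion m i j); assumption);
      cbn [fusion In] in hc; destruct hc as [<- | []];
      unfold inD_m; eauto.
  - intros a b [-> | [-> | [i [hi ->]]]] [-> | [-> | [j [hj ->]]]];
      try apply stilde_gamma_multiples;
      cbn [stilde dim]; f_equal; ring.
Qed.
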